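(* Let $j,k,\ell$ be integers with $3\leq j+2\leq\ell\leq k$, and let $G$ be a graph on $n$ vertices with minimum degree $\delta(G)>\frac{(k-1)n}{k}$ and at least two $K_{k+1}$-components. Suppose $G$ does not contain the configuration $(\dagger^{(p)})^k_q$ for all pairs $p,q$ of positive integers such that $p<q<\ell$, or such that $j<p<q=\ell$. Then $G$ does not contain the configuration $(\dagger^{(j)})^k_\ell$.
   Context: A $K_{k+1}$-walk in $G$ is a sequence of copies of $K_k$ in which consecutive copies lie in a common copy of $K_{k+1}$; the endpoints are then $K_{k+1}$-connected, and the equivalence classes of copies of $K_k$ are the $K_{k+1}$-components. For integers $1\leq j<\ell\leq k$, $G$ contains the configuration $(\dagger^{(j)})^k_\ell$ if there are (not necessarily distinct) vertices $u_1,\dots,u_k$, $v_{j+1},\dots,v_\ell$ and $w_{p1},\dots,w_{p(\ell-1)}$ for $j<p\leq\ell$ such that: (CG1) $u_1\dots u_k$ is a copy of $K_k$ lying in some $K_{k+1}$-component $C$ of $G$; (CG2) $u_1\dots u_jv_{j+1}\dots v_\ell u_{\ell+1}\dots u_k$ is a copy of $K_k$ in $G$ not in $C$; (CG3) for every $j<p\leq\ell$, $u_pw_{p1}\dots w_{p(\ell-1)}u_{\ell+1}\dots u_k$ is a copy of $K_k$ in $G$ not in $C$. *)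

From mathcomp Require Import all_boot.
Set Implicit Arguments. Unset Strict Implicit. Unset Printing Implicit Defensive.

(* A simple graph: vertex type V : finType, adjacency adj : rel V, assumed
   symmetric and irreflexive in the theorem. *)

Section Defs.
Variables (V : finType) (adj : rel V).

Definition is_clique (A : {set V}) : bool :=
  [forall x in A, forall y in A, (x != y) ==> adj x y].

Definition is_Kcopy (r : nat) (A : {set V}) : bool :=
  (#|A| == r) && is_clique A.

Definition seq_Kcopy (r : nat) (s : seq V) : bool :=
  [&& uniq s, size s == r & is_clique [set x in s]].

Definition Kwalk_step (k : nat) : rel {set V} := fun A B =>
  [&& is_Kcopy k A, is_Kcopy k B &
      [exists K : {set V}, [&& is_Kcopy k.+1 K, A \subset K & B \subset K]]].

Definition Kconnected (k : nat) (A B : {set V}) : bool :=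
  connect (Kwalk_step k) A B.

Definition two_Kcomponents (k : nat) : Prop :=
  exists A B : {set V}, [/\ is_Kcopy k A, is_Kcopy k B & ~~ Kconnected k A B].

Definition deg (x : V) : nat := #|[set y | adj x y]|.

(* vertices indexed by naturals; idx a b = [a, a+1, ..., b] *)
Definition idx (a b : nat) : seq nat := iota a (b.+1 - a).

Definition config (j k l : nat) : Prop :=
  exists (u v : nat -> V) (w : nat -> nat -> V),
    let U := map u (idx 1 k) in
    let S2 := map u (idx 1 j) ++ map v (idx j.+1 l) ++ map u (idx l.+1 k) in
    let S3 p := u p :: map (w p) (idx 1 l.-1) ++ map u (idx l.+1 k) in
    [/\ seq_Kcopy k U,
        seq_Kcopy k S2 /\ ~~ Kconnected k [set x in U] [set x in S2] &
        forall p, j < p <= l ->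
          seq_Kcopy k (S3 p) /\ ~~ Kconnected k [set x in U] [set x in S3 p]].

End Defs.

From mathcomp Require Import all_boot zify.
Set Implicit Arguments. Unset Strict Implicit. Unset Printing Implicit Defensive.

(* Let U = u_1..u_k be the copy in C, S = u_1..u_j v_(j+1)..v_l u_(l+1)..u_k the copy
   outside C, A = S minus the v's and R = {u_(l+1), .., u_k}.  If every v_i lay, together
   with A, in a copy of K_k outside the component of S, these copies would form
   (dagger^(1))^k_(l-j); so some v = v_i is stuck: every copy of K_k containing v and A is
   connected to S, hence not in C.  Now walk inside C from U, keeping A.  A vertex b that is
   not adjacent to v is traded for a common neighbour y of v and the k-1 other vertices
   (it exists by the minimum degree); the trade stays inside C, for otherwise the old copy,
   the new copy and a copy through b and R outside C would form (dagger^(l-1))^k_l.  Such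
   copies through b and R exist initially by (CG3), since the non-neighbours of v in U are
   among u_(j+1)..u_l, and later non-neighbours of v are earlier ones.  When no
   non-neighbour of v is left, adding v and dropping a vertex outside A yields a copy of
   K_k in C containing v and A, a contradiction. *)

Lemma map_nth_shift (T : Type) (x0 : T) (s : seq T) c m n :
  [seq nth x0 s (i - c) | i <- iota (c + m) n] = [seq nth x0 s i | i <- iota m n].
Proof. by rewrite iotaDl -map_comp; apply: eq_map => i /=; rewrite addKn. Qed.

Lemma map_nth_shift_size (T : Type) (x0 : T) (s : seq T) c :
  [seq nth x0 s (i - c) | i <- iota c (size s)] = s.
Proof.
by have := map_nth_shift x0 s c 0 (size s); rewrite addn0 map_nth_iota0 // take_size.
Qed.

Lemma idx_cat a b c : a <= b.+1 -> b <= c -> idx a b ++ idx b.+1 c = idx a c.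
Proof.
move=> ab bc; rewrite /idx -[in iota b.+1](subnKC ab) -iotaD.
by congr iota; lia.
Qed.

Lemma idxE a b : idx a.+1 b = iota (1 + a) (b - a).
Proof. by rewrite /idx subSS. Qed.

Lemma card_bigcup_le (I T : finType) (P : pred I) (F : I -> {set T}) :
  #|\bigcup_(i | P i) F i| <= \sum_(i | P i) #|F i|.
Proof.
elim/big_rec2: _ => [|i n U _ leUn]; first by rewrite cards0.
by rewrite (leq_trans (leq_card_setU _ _).1) ?leq_add2l.
Qed.

Section Cliques.
Variables (V : finType) (adj : rel V).
Hypothesis adj_sym : symmetric adj.

Lemma cliqueP (A : {set V}) :
  reflect {in A &, forall x y, x != y -> adj x y} (is_clique adj A).
Proof.
apply: (iffP forall_inP) => [cl x y xA yA | cl x xA].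
  by move/forall_inP/(_ y yA)/implyP: (cl x xA).
by apply/forall_inP => y yA; apply/implyP; apply: cl.
Qed.

Lemma clique_subset (A B : {set V}) :
  A \subset B -> is_clique adj B -> is_clique adj A.
Proof.
by move=> /subsetP AB /cliqueP clB; apply/cliqueP => x y /AB xB /AB; apply: clB.
Qed.

Lemma clique_setU1 (A : {set V}) y :
  is_clique adj A -> {in A, forall x, adj x y} -> is_clique adj (y |: A).
Proof.
move=> /cliqueP clA Ay; apply/cliqueP => x x'; rewrite !in_setU1.
case/predU1P => [->|xA]; case/predU1P => [->|x'A]; rewrite ?eqxx // => neq.
- by rewrite adj_sym; apply: Ay.
- exact: Ay.
- exact: clA.
Qed.

Lemma Kcopy_setU1 k (X : {set V}) y :
  is_Kcopy adj k X -> y \notin X -> {in X, forall x, adj x y} ->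
  is_Kcopy adj k.+1 (y |: X).
Proof.
case/andP=> /eqP cX clX yX Xy; rewrite /is_Kcopy cardsU1 yX cX eqxx /=.
exact: clique_setU1.
Qed.

Lemma Kcopy_swap k (X : {set V}) b y :
  is_Kcopy adj k X -> b \in X -> y \notin X :\ b -> {in X :\ b, forall x, adj x y} ->
  is_Kcopy adj k (y |: X :\ b).
Proof.
case/andP=> /eqP cX clX bX yXb Xy; rewrite /is_Kcopy cardsU1 yXb.
rewrite (cardsD1 b) bX in cX; rewrite cX eqxx /=.
exact/clique_setU1/Xy/(clique_subset (subsetDl _ _) clX).
Qed.

End Cliques.

Section Components.
Variables (V : finType) (adj : rel V) (k : nat).

Lemma Kwalk_step_sym : symmetric (Kwalk_step adj k).
Proof.
move=> A B; rewrite /Kwalk_step andbCA; congr [&& _, _ & _].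
by apply: eq_existsb => K; rewrite [(A \subset K) && _]andbC.
Qed.

Lemma Kconnected_sym (A B : {set V}) : Kconnected adj k A B = Kconnected adj k B A.
Proof. exact: (sym_connect_sym Kwalk_step_sym). Qed.

Definition Kapart (X Z : {set V}) : bool :=
  is_Kcopy adj k Z && ~~ Kconnected adj k X Z.

Definition escapes (X R : {set V}) (x : V) : bool :=
  [exists Z, Kapart X Z && (x |: R \subset Z)].

Lemma Kapart_connected (X Y Z : {set V}) :
  Kconnected adj k X Y -> Kapart X Z -> Kapart Y Z.
Proof.
move=> XY /andP[ZK nXZ]; rewrite /Kapart ZK; apply: contra nXZ.
exact: connect_trans.
Qed.

Lemma escapes_connected (X Y R : {set V}) x :
  Kconnected adj k X Y -> escapes X R x -> escapes Y R x.
Proof.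
move=> XY /existsP[Z /andP[XZ xRZ]]; apply/existsP; exists Z.
by rewrite (Kapart_connected XY XZ).
Qed.

End Components.

Section Configurations.
Variables (V : finType) (adj : rel V) (k : nat).

Lemma seq_KcopyE (s : seq V) :
  seq_Kcopy adj k s = uniq s && is_Kcopy adj k [set x in s].
Proof.
by rewrite /seq_Kcopy /is_Kcopy cardsE; case: (boolP (uniq s)) => // /card_uniqP ->.
Qed.

Definition fill_seq (P R Z : {set V}) : seq V :=
  enum P ++ enum (Z :\: (P :|: R)) ++ enum R.

Lemma set_fill_seq (P R Z : {set V}) :
  P :|: R \subset Z -> [set x in fill_seq P R Z] = Z.
Proof.
move=> /subsetP PRZ; apply/setP => x; have := PRZ x.
rewrite !inE !mem_cat !mem_enum !inE.
by case: (x \in P) (x \in R) (x \in Z) => [] [] [] // ->.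
Qed.

Lemma fill_seq_uniq (P R Z : {set V}) : [disjoint P & R] -> uniq (fill_seq P R Z).
Proof.
move=> PR; rewrite /fill_seq !cat_uniq !enum_uniq has_cat /= andbT.
rewrite negb_or -andbA; apply/and3P; split; apply/hasPn => x; rewrite !mem_enum ?inE.
- by case: (x \in P).
- by move=> xR; rewrite (disjointFl PR xR).
- by move=> ->; rewrite orbT.
Qed.

Lemma seq_Kcopy_fill (P R Z : {set V}) :
  [disjoint P & R] -> P :|: R \subset Z -> is_Kcopy adj k Z ->
  seq_Kcopy adj k (fill_seq P R Z).
Proof. by move=> PR PRZ ZK; rewrite seq_KcopyE fill_seq_uniq // set_fill_seq. Qed.

Lemma config_of_seqs (x0 : V) p q (a b r t : seq V) (tw : V -> seq V) :
  q <= k -> size a = p -> size r = k - q ->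
  seq_Kcopy adj k (a ++ b ++ r) ->
  seq_Kcopy adj k (a ++ t ++ r) ->
  ~~ Kconnected adj k [set x in a ++ b ++ r] [set x in a ++ t ++ r] ->
  {in b, forall x, seq_Kcopy adj k (x :: tw x ++ r) &&
     ~~ Kconnected adj k [set x in a ++ b ++ r] [set y in x :: tw x ++ r]} ->
  config adj p k q.
Proof.
move=> qk sa sr sK tK nst bK.
have size_K c : seq_Kcopy adj k c -> size c = k by case/and3P=> _ /eqP.
have [pq sb] : p <= q /\ size b = q - p.
  by have := size_K _ sK; rewrite !size_cat sa sr; lia.
have st : size t = q - p by have := size_K _ tK; rewrite !size_cat sa sr; lia.
set s := a ++ b ++ r.
pose u i := nth x0 s (i - 1).
exists u, (fun i => nth x0 t (i - p.+1)), (fun i j => nth x0 (tw (u i)) (j - 1)) => /=.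
have u_idx m n : m <= n <= k -> map u (idx m.+1 n) = take (n - m) (drop m s).
  by move=> mnk; rewrite idxE map_nth_shift map_nth_iota // (size_K _ sK); lia.
have Es : map u (idx 1 k) = s.
  by rewrite u_idx ?leqnn ?subn0 ?drop0 ?take_oversize ?(size_K _ sK).
have Ea : map u (idx 1 p) = a by rewrite u_idx ?subn0 ?drop0 ?take_size_cat //; lia.
have Eb : map u (idx p.+1 q) = b.
  by rewrite u_idx ?pq // drop_size_cat // -sb take_size_cat.
have Er : map u (idx q.+1 k) = r.
  rewrite u_idx ?qk ?leqnn // /s catA drop_size_cat -?sr ?take_size //.
  by rewrite size_cat sa sb; lia.
have Et : map (fun i => nth x0 t (i - p.+1)) (idx p.+1 q) = t.
  by rewrite idxE add1n -st map_nth_shift_size.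
split.
- by rewrite Es.
- by rewrite Es Ea Et Er.
move=> i /andP[pi iq].
have ub : u i \in b by rewrite -Eb map_f // idxE mem_iota; lia.
have /andP[K nK] := bK _ ub.
have stw : size (tw (u i)) = q.-1 by have := size_K _ K; rewrite /= size_cat sr; lia.
by rewrite Es Er idxE subn0 -stw map_nth_shift_size.
Qed.

Lemma config_of_sets (x0 : V) p q (X P R : {set V}) :
  q <= k -> is_Kcopy adj k X -> P :|: R \subset X -> [disjoint P & R] ->
  #|P| = p -> #|R| = k - q ->
  (exists2 Z, Kapart adj k X Z & P :|: R \subset Z) ->
  {in X :\: (P :|: R), forall x, escapes adj k X R x} ->
  config adj p k q.
Proof.
move=> qk XK PRX PR cP cR [Z2 /andP[Z2K nXZ2] PRZ2] Mesc.
pose Zf x := odflt set0 [pick Z | Kapart adj k X Z && (x |: R \subset Z)].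
have ZfP : {in X :\: (P :|: R), forall x, Kapart adj k X (Zf x) && (x |: R \subset Zf x)}.
  move=> x /Mesc/existsP[Z HZ]; rewrite /Zf.
  by case: pickP => [//|/(_ Z)]; rewrite HZ.
apply: (config_of_seqs x0 (t := enum (Z2 :\: (P :|: R)))
  (tw := fun x => enum (Zf x :\: (x |: R)))) qk _ _ (seq_Kcopy_fill PR PRX XK) _ _ _.
- by rewrite -cardE.
- by rewrite -cardE.
- exact: seq_Kcopy_fill.
- by rewrite -/(fill_seq P R X) -/(fill_seq P R Z2) !set_fill_seq.
move=> x; rewrite mem_enum => xM; have /andP[/andP[ZK nXZ] xRZ] := ZfP x xM.
have xR : [disjoint [set x] & R].
  by rewrite disjoints1; move: xM; rewrite !inE negb_or => /andP[/andP[]].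
have -> : x :: enum (Zf x :\: (x |: R)) ++ enum R = fill_seq [set x] R (Zf x).
  by rewrite /fill_seq enum_set1.
by rewrite seq_Kcopy_fill // -/(fill_seq P R X) !set_fill_seq.
Qed.

Lemma config1_of_escapes (S W : {set V}) :
  is_Kcopy adj k S -> W \subset S -> 0 < #|W| ->
  {in W, forall x, escapes adj k S (S :\: W) x} -> config adj 1 k #|W|.
Proof.
move=> SK WS /card_gt0P[w wW] Wesc.
have cS : #|S| = k by case/andP: SK => /eqP.
have /existsP[Z /andP[SZ wZ]] := Wesc w wW.
apply: (config_of_sets w (X := S) (P := [set w]) (R := S :\: W)) => //.
- by rewrite -cS subset_leq_card.
- by rewrite subUset sub1set (subsetP WS) ?subsetDl.
- by rewrite disjoints1 !inE wW.
- exact: cards1.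
- by rewrite cardsDS ?cS.
- by exists Z.
move=> x; rewrite !inE => /andP[+ xS]; rewrite xS andbT negb_or negbK.
by case/andP=> _; apply: Wesc.
Qed.

Lemma config_pred_of_swap q (X Y R : {set V}) b :
  q <= k -> is_Kcopy adj k X -> R \subset X -> #|R| = k - q -> b \in X :\: R ->
  Kapart adj k X Y -> X :\ b \subset Y -> escapes adj k X R b -> config adj q.-1 k q.
Proof.
move=> qk XK RX cR bXR XY XbY besc.
have cX : #|X| = k by case/andP: XK => /eqP.
move: bXR; rewrite inE => /andP[bR bX].
apply: (config_of_sets b (X := X) (P := X :\: (b |: R)) (R := R)) => //.
- by rewrite subUset subsetDl RX.
- by rewrite disjoint_sym disjoints_subset; apply/subsetP => x xR; rewrite !inE xR orbT.
- by rewrite cardsDS ?subUset ?sub1set ?bX // cardsU1 bR cR cX; lia.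
- exists Y => //; apply: subset_trans XbY; apply/subsetP => x; rewrite !inE.
  case: eqVneq => [->|_ /=]; first by rewrite (negbTE bR).
  by case/orP=> [/andP[]//|/(subsetP RX)].
by move=> x; rewrite !inE; case: eqP => [-> //|_]; case: (x \in R); case: (x \in X).
Qed.

End Configurations.

Lemma exists_stuck_vertex (V : finType) (adj : rel V) k (X0 W A : {set V}) :
  [disjoint W & A] -> Kapart adj k X0 (W :|: A) -> 0 < #|W| -> ~ config adj 1 k #|W| ->
  exists2 z, z \in W &
    forall Z, is_Kcopy adj k Z -> z |: A \subset Z -> ~~ Kconnected adj k X0 Z.
Proof.
move=> WA /andP[SK nX0S] W_gt0 no_config1.
have SW : (W :|: A) :\: W = A.
  by rewrite setDUl setDv set0U; apply/setDidPl; rewrite disjoint_sym.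
case: (boolP [forall x in W, escapes adj k (W :|: A) A x]) => [/forall_inP Wesc|].
  by case: no_config1; apply: config1_of_escapes SK (subsetUl _ _) W_gt0 _; rewrite SW.
rewrite negb_forall_in => /exists_inP[z zW zesc]; exists z => // Z ZK zAZ.
apply: contra zesc => X0Z; apply/existsP; exists Z; rewrite zAZ andbT /Kapart ZK /=.
by apply: contra nX0S; rewrite Kconnected_sym; exact: connect_trans X0Z.
Qed.

Section CommonNeighbour.
Variables (V : finType) (adj : rel V) (k : nat).
Hypothesis mindeg : forall x : V, (k - 1) * #|V| < k * deg adj x.

Lemma common_neighbour (S : {set V}) :
  0 < #|V| -> #|S| <= k -> exists y, {in S, forall x, adj x y}.
Proof.
move=> V_gt0 Sk.
pose N x := [set y | ~~ adj x y].
have kN x : k * #|N x| < #|V|.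
  have := mindeg x; have := cardsC [set y | adj x y]; rewrite /deg.
  have -> : ~: [set y | adj x y] = N x by apply/setP => y; rewrite !inE.
  nia.
have k_gt0 : 0 < k by case/card_gt0P: V_gt0 => x _; move: (mindeg x); case: k.
have cover_small : #|\bigcup_(x in S) N x| < #|V|.
  apply: leq_ltn_trans (card_bigcup_le _ _) _.
  rewrite -(ltn_pmul2l k_gt0) big_distrr /=.
  apply: (@leq_ltn_trans (#|S| * #|V|.-1)).
    by rewrite -sum_nat_const; apply: leq_sum => x _; rewrite -ltnS prednK.
  apply: leq_ltn_trans (leq_mul Sk (leqnn _)) _.
  by rewrite ltn_pmul2l // prednK.
have /subsetPn[y _ yN] : ~~ ([set: V] \subset \bigcup_(x in S) N x).
  by apply: contraTN cover_small => /subset_leq_card; rewrite cardsT -leqNgt.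
exists y => x xS; apply: contraNT yN => nxy; apply/bigcupP; exists x => //.
by rewrite inE.
Qed.

End CommonNeighbour.

Section StuckVertex.
Variables (V : finType) (adj : rel V) (k l : nat).
Hypotheses (adj_sym : symmetric adj) (adj_irr : irreflexive adj).
Hypothesis mindeg : forall x : V, (k - 1) * #|V| < k * deg adj x.
Hypotheses (l_le_k : l <= k) (no_config_pred : ~ config adj l.-1 k l).
Variables (X0 A R : {set V}) (z : V).
Hypotheses (R_sub_A : R \subset A) (card_R : #|R| = k - l) (A_small : #|A| < k).
Hypothesis A_adj_z : {in A, forall y, adj y z}.
Hypothesis z_stuck :
  forall Z, is_Kcopy adj k Z -> z |: A \subset Z -> ~~ Kconnected adj k X0 Z.

Lemma swap_Kconnected (X Y : {set V}) b :
  is_Kcopy adj k X -> is_Kcopy adj k Y -> R \subset X -> b \in X :\: R ->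
  X :\ b \subset Y -> escapes adj k X R b -> Kconnected adj k X Y.
Proof.
move=> XK YK RX bXR XbY besc; apply/negPn/negP => nXY; apply: no_config_pred.
by apply: (config_pred_of_swap l_le_k XK RX card_R bXR _ XbY besc); rewrite /Kapart YK.
Qed.

Lemma stuck_base (X : {set V}) :
  is_Kcopy adj k X -> Kconnected adj k X0 X -> A \subset X ->
  {in X, forall x, adj x z} -> False.
Proof.
move=> XK X0X AX Xz.
have zX : z \notin X.
  by apply: contraTN X0X => zX; apply: z_stuck; rewrite // subUset sub1set zX.
have [x xX xA] : exists2 x, x \in X & x \notin A.
  apply/subsetPn; apply: contraTN A_small => /subset_leq_card.
  by case/andP: XK => /eqP -> _; rewrite -leqNgt.
have zXx : z \notin X :\ x by rewrite inE (negbTE zX) andbF.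
have Xxz : {in X :\ x, forall y, adj y z} by move=> y /setD1P[_ /Xz].
have YK := Kcopy_swap adj_sym XK xX zXx Xxz.
have XY : Kconnected adj k X (z |: X :\ x).
  apply: connect1; rewrite /Kwalk_step XK YK; apply/existsP; exists (z |: X).
  by rewrite Kcopy_setU1 // subsetUr setUS // subsetDl.
have zAY : z |: A \subset z |: X :\ x by rewrite setUS // subsetD1 AX.
by move/negP: (z_stuck YK zAY); apply; apply: connect_trans X0X XY.
Qed.

Lemma stuck_step (X : {set V}) b :
  is_Kcopy adj k X -> A \subset X -> b \in X -> ~~ adj b z -> escapes adj k X R b ->
  exists2 y, adj y z & is_Kcopy adj k (y |: X :\ b) && Kconnected adj k X (y |: X :\ b).
Proof.
move=> XK AX bX nbz besc.
have cX : #|X| = k by case/andP: XK => /eqP.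
have V_gt0 : 0 < #|V| by apply/card_gt0P; exists b.
have small : #|z |: X :\ b| <= k.
  by rewrite cardsU1 -ltnS -cX (cardsD1 b X) bX; case: (z \notin _).
have [y zXy] := common_neighbour mindeg V_gt0 small.
have yz : adj y z by rewrite adj_sym zXy ?setU11.
have yXb : y \notin X :\ b by apply: contraFN (adj_irr y) => /(setU1r z)/zXy.
have YK := Kcopy_swap adj_sym XK bX yXb (fun x xXb => zXy x (setU1r z xXb)).
exists y; rewrite // YK /=.
have bA : b \notin A by apply: contra nbz; apply: A_adj_z.
apply: (swap_Kconnected (b := b)) => //; first exact: subset_trans R_sub_A AX.
- by rewrite inE bX andbT; apply: contra bA; apply: (subsetP R_sub_A).
- exact: subsetUr.
Qed.

Lemma no_reachable_Kcopy (X : {set V}) :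
  is_Kcopy adj k X -> Kconnected adj k X0 X -> A \subset X ->
  {in X, forall x, ~~ adj x z -> escapes adj k X0 R x} -> False.
Proof.
move Hd : #|[set x in X | ~~ adj x z]| => d.
elim: d X Hd => [|d IH] X Hd XK X0X AX Xesc.
  apply: (stuck_base XK X0X AX) => x xX; apply/negPn/negP => nxz.
  by move/eqP: Hd; rewrite cards_eq0 => /eqP/setP/(_ x); rewrite !inE xX nxz.
have [b] : exists b, b \in [set x in X | ~~ adj x z] by apply/card_gt0P; rewrite Hd.
rewrite inE => /andP[bX nbz].
have bX0 := escapes_connected X0X (Xesc b bX nbz).
have [y yz /andP[YK XY]] := stuck_step XK AX bX nbz bX0.
have bA : b \notin A by apply: contra nbz; apply: A_adj_z.
apply: (IH (y |: X :\ b)) => //.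
- have -> : [set x in y |: X :\ b | ~~ adj x z] = [set x in X | ~~ adj x z] :\ b.
    apply/setP => x; rewrite !inE.
    by case: eqVneq => [->|]; rewrite ?yz ?andbF //= andbA.
  by move: Hd; rewrite (cardsD1 b) inE bX nbz => -[].
- exact: connect_trans X0X XY.
- by rewrite subsetU // subsetD1 AX bA orbT.
- move=> x; rewrite !inE; case: eqVneq => [->|_ /andP[_ xX]]; first by rewrite yz.
  exact: Xesc.
Qed.

Lemma no_escaping_Kcopy :
  is_Kcopy adj k X0 -> A \subset X0 ->
  {in X0 :\: A, forall x, escapes adj k X0 R x} -> False.
Proof.
move=> X0K AX0 X0esc; apply: (no_reachable_Kcopy X0K (connect0 _ _) AX0) => x xX0 nxz.
by apply: X0esc; rewrite inE xX0 andbT; apply: contra nxz; apply: A_adj_z.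
Qed.

End StuckVertex.

Lemma config_sets (V : finType) (adj : rel V) j k l :
  j <= l <= k -> config adj j k l ->
  exists X0 W A R : {set V},
    [/\ is_Kcopy adj k X0, Kapart adj k X0 (W :|: A), [disjoint W & A],
        #|W| = l - j & A \subset X0] /\
    [/\ R \subset A, #|R| = k - l & {in X0 :\: A, forall x, escapes adj k X0 R x}].
Proof.
move=> /andP[jl lk] [u [v [w]]] /=.
set a := map u (idx 1 j); set b := map u (idx j.+1 l); set r := map u (idx l.+1 k).
set vs := map v (idx j.+1 l).
have -> : map u (idx 1 k) = a ++ b ++ r by rewrite -!map_cat catA !idx_cat.
move=> [UK [SK nUS] S3K].
have SE : [set x in a ++ vs ++ r] = [set x in vs] :|: [set x in a ++ r].
  by apply/setP => x; rewrite !inE !mem_cat orbCA.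
rewrite !seq_KcopyE in UK SK; case/andP: UK => uU X0K; case/andP: SK => uS SK.
have [uvs vs_ar] : uniq vs /\ {in a ++ r, forall x, x \notin vs}.
  have /perm_uniq uS' : perm_eq (a ++ vs ++ r) (vs ++ a ++ r) by rewrite perm_catCA.
  rewrite uS' cat_uniq in uS.
  by case/and3P: uS => ? /hasPn.
have ur : uniq r by move: uU; rewrite !cat_uniq => /and3P[_ _ /and3P[]].
exists [set x in a ++ b ++ r], [set x in vs], [set x in a ++ r], [set x in r]; split; split.
- exact: X0K.
- by rewrite /Kapart -SE SK.
- by rewrite disjoint_sym disjoints_subset; apply/subsetP => x; rewrite !inE => /vs_ar.
- by rewrite cardsE (card_uniqP uvs) size_map idxE size_iota.
- by apply/subsetP => x; rewrite !inE !mem_cat => /orP[]->; rewrite ?orbT.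
- by apply/subsetP => x; rewrite !inE mem_cat => ->; rewrite orbT.
- by rewrite cardsE (card_uniqP ur) size_map idxE size_iota.
move=> x; rewrite !inE !mem_cat negb_or => /andP[/andP[xa xr]].
rewrite (negbTE xa) (negbTE xr) orbF => /mapP[p]; rewrite idxE mem_iota => pjl ->.
have /S3K[S3pK nUS3] : j < p <= l by lia.
rewrite seq_KcopyE in S3pK; case/andP: S3pK => _ S3pK.
apply/existsP; exists [set x in u p :: map (w p) (idx 1 l.-1) ++ r].
rewrite /Kapart S3pK nUS3 /=.
by apply/subsetP => y; rewrite !inE mem_cat => /orP[|]->; rewrite ?orbT.
Qed.

Theorem lemma5p1 (V : finType) (adj : rel V) (j k l : nat) :
  symmetric adj -> irreflexive adj ->
  3 <= j + 2 <= l -> l <= k ->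
  (forall x : V, (k - 1) * #|V| < k * deg adj x) ->
  two_Kcomponents adj k ->
  (forall p q : nat, 0 < p ->
     (p < q < l) \/ (j < p /\ p < q /\ q = l) -> ~ config adj p k q) ->
  ~ config adj j k l.
Proof.
(* two_Kcomponents is implied by the configuration itself. *)
move=> adj_sym adj_irr /andP[j_gt0 jl] lk mindeg _ no_config.
have jlk : j <= l <= k by apply/andP; split; lia.
case/(config_sets jlk)=> X0 [W [A [R [[X0K SX0 WA cW AX0] [RA cR X0esc]]]]].
have W_gt0 : 0 < #|W| by rewrite cW; lia.
have no_config1 : ~ config adj 1 k #|W| by apply: no_config; rewrite // cW; left; lia.
have [z zW z_stuck] := exists_stuck_vertex WA SX0 W_gt0 no_config1.
have /andP[/andP[/eqP cS /cliqueP S_clique] _] := SX0.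
have A_small : #|A| < k.
  by move: cS; rewrite cardsU disjoint_setI0 // cards0 cW; lia.
have A_adj_z : {in A, forall y, adj y z}.
  move=> y yA; apply: S_clique; rewrite ?inE ?yA ?zW ?orbT //.
  by apply: contraTneq yA => ->; rewrite (disjointFr WA zW).
have no_config_pred : ~ config adj l.-1 k l by apply: no_config; [lia | right; lia].
exact: (no_escaping_Kcopy adj_sym adj_irr mindeg lk no_config_pred RA cR A_small A_adj_z
  z_stuck X0K AX0 X0esc).
Qed.
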